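(* Let $k$ be a positive integer and let $s$ be an even positive integer. Then there exists a hypergraph $\mathcal{F}$ (with $s < |e|$ for every hyperedge $e$ of $\mathcal{F}$) such that $\chi\left({\rm KG}^2(\mathcal{F}, s)\right) = k$ and $${\rm cd}^2(\mathcal{F}, l) = {\rm ecd}^2(\mathcal{F}, l) = k(2l - s + 1)$$ for each $l \in \left\{\frac{s}{2} + 1, \frac{s}{2} + 2, \dots, s\right\}$.
   Context: A hypergraph $\mathcal{F}$ consists of a finite vertex set $V(\mathcal{F})$ and a set $E(\mathcal{F}) \subseteq 2^{V(\mathcal{F})} \setminus \{\varnothing\}$ of hyperedges. For an integer $r \geq 2$ and a nonnegative integer $s$ with $s < |e|$ for every hyperedge $e$ of $\mathcal{F}$, the generalized Kneser hypergraph ${\rm KG}^r(\mathcal{F}, s)$ is the $r$-uniform hypergraph whose vertex set is $E(\mathcal{F})$, in which $r$ distinct hyperedges $e_1, \dots, e_r$ of $\mathcal{F}$ form a hyperedge whenever $|e_i \cap e_j| \leq s$ for all distinct $i, j \in \{1, \dots, r\}$. Its chromatic number $\chi$ is the minimum size of a set $C$ admitting a map $f : E(\mathcal{F}) \to C$ such that no hyperedge of ${\rm KG}^r(\mathcal{F}, s)$ is monochromatic (for $r = 2$ this is the ordinary chromatic number of the graph). For sets $A, B$ and a nonnegative integer $t$, write $A \subseteq_t B$ if $|A \setminus B| \leq t$. For a nonnegative integer $t$ with $t < |e|$ for all hyperedges $e$, the $t$-th $r$-colorability defect ${\rm cd}^r(\mathcal{F}, t)$ is the minimum cardinality of a set $X_0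 \subseteq V(\mathcal{F})$ for which there is a partition $\{X_1, \dots, X_r\}$ of $V(\mathcal{F}) \setminus X_0$ (parts may be empty) such that $e \not\subseteq_t X_i$ for every hyperedge $e \in E(\mathcal{F})$ and every $i \in \{1, \dots, r\}$. The $t$-th equitable $r$-colorability defect ${\rm ecd}^r(\mathcal{F}, t)$ is defined in the same way, with the additional requirement that $\big||X_i| - |X_j|\big| \leq 1$ for all $1 \leq i < j \leq r$. *)

From mathcomp Require Import all_boot.
Set Implicit Arguments. Unset Strict Implicit. Unset Printing Implicit Defensive.

(* A hypergraph F has vertex set T (a finType) and hyperedge set E : {set {set T}}. *)

Section Kneser.
Variable T : finType.
Implicit Types (E : {set {set T}}) (s t r c : nat).

(* f is a proper coloring of KG^r(F, s) with c colors: no r distinct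
   hyperedges, pairwise intersecting in at most s vertices, get the same color. *)
Definition kneser_proper_coloring r E s c (f : {ffun {set T} -> 'I_c}) : Prop :=
  forall (es : seq {set T}), size es = r -> uniq es -> {subset es <= E} ->
    (forall e1 e2, e1 \in es -> e2 \in es -> e1 != e2 -> #|e1 :&: e2| <= s) ->
    ~ (forall e1 e2, e1 \in es -> e2 \in es -> f e1 = f e2).

Definition kneser_colorable r E s c : Prop :=
  exists f : {ffun {set T} -> 'I_c}, kneser_proper_coloring r E s f.

Definition kneser_chi_eq r E s k : Prop :=
  kneser_colorable r E s k /\ (forall c, kneser_colorable r E s c -> k <= c).

Definition subset_t (A B : {set T}) t : bool := #|A :\: B| <= t.

(* g assigns each vertex to X_0 (None) or to part X_i (Some i), i < r. *)
Definition part r (g : {ffun T -> option 'I_r}) (i : option 'I_r) : {set T} :=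
  [set x | g x == i].

Definition cd_admissible r E t (g : {ffun T -> option 'I_r}) : bool :=
  [forall e in E, forall i : 'I_r, ~~ subset_t e (part g (Some i)) t].

Definition equitable r (g : {ffun T -> option 'I_r}) : bool :=
  [forall i : 'I_r, forall j : 'I_r,
     #|part g (Some i)| <= #|part g (Some j)| + 1].

Definition cd r E t : nat :=
  \big[minn/#|T|]_(g : {ffun T -> option 'I_r} | cd_admissible E t g)
     #|part g None|.

Definition ecd r E t : nat :=
  \big[minn/#|T|]_(g : {ffun T -> option 'I_r} | cd_admissible E t g && equitable g)
     #|part g None|.

End Kneser.

From mathcomp Require Import all_boot zify.

(* Take for F a perfect matching of k disjoint (s+1)-sets.  Any two edges are
   disjoint, so KG^2(F, s) is the complete graph on k vertices and chi = k.
   If e is not contained in X_1 nor in X_2 up to l vertices, then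
   |e \ X_1| + |e \ X_2| = |e| + |e ∩ X_0| forces |e ∩ X_0| >= 2l + 1 - s,
   and summing over the disjoint edges gives cd >= k(2l - s + 1).  Putting s - l
   vertices of every edge in X_1, s - l in X_2 and the rest in X_0 attains this
   bound with |X_1| = |X_2|. *)

Set Implicit Arguments.
Unset Strict Implicit.
Unset Printing Implicit Defensive.

Lemma big_minn_le (I : eqType) (r : seq I) (P : pred I) (F : I -> nat) x0 i0 :
  i0 \in r -> P i0 -> \big[minn/x0]_(i <- r | P i) F i <= F i0.
Proof.
elim: r => // i r IHr; rewrite inE big_cons => /orP[/eqP <-|r_i0] P_i0.
  by rewrite P_i0 geq_minl.
by case: ifP => _; rewrite ?geq_min IHr ?orbT.
Qed.

Lemma big_minn_attained (I : finType) (P : pred I) (F : I -> nat) x0 i0 :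
  P i0 -> F i0 <= x0 -> (forall i, P i -> F i0 <= F i) ->
  \big[minn/x0]_(i | P i) F i = F i0.
Proof.
move=> P_i0 le_i0_x0 min_i0; apply/eqP; rewrite eqn_leq big_minn_le ?mem_index_enum //=.
by elim/big_ind: _ => // a b; rewrite leq_min => -> ->.
Qed.

Lemma card_ord_range m a b : b <= m -> #|[pred t : 'I_m | a <= t < b]| = b - a.
Proof.
move=> le_bm; rewrite -sum1_card -[b - a]muln1 -sum_nat_const_nat.
rewrite (big_nat_widen _ _ _ _ _ le_bm) big_geq_mkord.
by apply: eq_bigl => t; rewrite inE andbC.
Qed.

Section Hypergraph.
Variable T : finType.
Implicit Types (E : {set {set T}}) (e A : {set T}) (s t : nat).

Lemma kneser2_properP E s c (f : {ffun {set T} -> 'I_c}) :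
  kneser_proper_coloring 2 E s f <->
  {in E &, forall e1 e2, e1 != e2 -> #|e1 :&: e2| <= s -> f e1 != f e2}.
Proof.
split=> [fP e1 e2 E_e1 E_e2 ne12 small|fP [|e1 [|e2 []]] //= _].
  apply/eqP => same; apply: (fP [:: e1; e2]) => //.
  - by rewrite /= inE ne12.
  - by move=> e; rewrite !inE => /orP[]/eqP->.
  - by move=> x y; rewrite !inE => /orP[]/eqP-> /orP[]/eqP->; rewrite ?eqxx // setIC.
  - by move=> x y; rewrite !inE => /orP[]/eqP-> /orP[]/eqP->.
rewrite inE andbT => ne12 sub small same.
have [in_e1 in_e2] : e1 \in [:: e1; e2] /\ e2 \in [:: e1; e2] by rewrite !inE !eqxx orbT.
move/eqP: (same _ _ in_e1 in_e2); apply/negP/fP; rewrite ?sub //.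
exact: small.
Qed.

Lemma kneser2_chi_trivIset E s : trivIset E -> E != set0 -> kneser_chi_eq 2 E s #|E|.
Proof.
move=> /trivIsetP disjE /set0Pn[e0 E_e0]; split.
  exists [ffun e => enum_rank_in E_e0 e]; apply/kneser2_properP => e1 e2 E_e1 E_e2 ne12 _.
  by rewrite !ffunE; apply: contra ne12 => /eqP/(enum_rank_in_inj E_e1 E_e2) ->.
move=> c [f /kneser2_properP fP]; rewrite -(card_ord c).
have inj_f : {in E &, injective f}.
  move=> e1 e2 E_e1 E_e2 /eqP; apply: contraTeq => ne12; apply: fP => //.
  by rewrite (disjoint_setI0 (disjE _ _ E_e1 E_e2 ne12)) cards0.
by rewrite -(card_in_imset inj_f) max_card.
Qed.

Lemma sum_card_setI_trivIset E A : trivIset E -> \sum_(e in E) #|e :&: A| <= #|A|.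
Proof.
move=> trivE; have -> : \sum_(e in E) #|e :&: A| = \sum_(e in E) \sum_(x in e | x \in A) 1.
  by apply: eq_bigr => e _; rewrite -sum1_card; apply: eq_bigl => x; rewrite inE.
rewrite -big_trivIset_cond // (eq_bigl [in cover E :&: A]) => [|x]; last by rewrite inE.
by rewrite sum1_card subset_leq_card ?subsetIr.
Qed.

Section TwoColoring.
Variables (E : {set {set T}}) (t : nat) (g : {ffun T -> option 'I_2}).
Hypothesis g_adm : cd_admissible E t g.

Lemma cd_admissible2_edge_bound e : e \in E -> 2 * t.+1 <= #|e| + #|e :&: part g None|.
Proof.
move=> E_e; have /forallP out := implyP (forallP g_adm e) E_e.
have := out ord0; have := out ord_max; rewrite /subset_t -!ltnNge.
set A := e :\: _; set B := e :\: _ => ltB ltA.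
have AUB_e : #|A :|: B| <= #|e| by apply/subset_leq_card; rewrite subUset !subsetDl.
have AIB_None : #|A :&: B| <= #|e :&: part g None|.
  apply/subset_leq_card/subsetP => x; rewrite !inE.
  by case/andP=> /andP[+ ->] /andP[+ _]; case: (g x) => // -[[|[|]]].
have := cardsUI A B; lia.
Qed.

Lemma cd_admissible2_part_None_bound m :
  trivIset E -> {in E, forall e, #|e| = m} -> #|E| * (2 * t.+1 - m) <= #|part g None|.
Proof.
move=> trivE card_E; apply: leq_trans (sum_card_setI_trivIset _ trivE).
rewrite -sum_nat_const; apply: leq_sum => e E_e.
by have := cd_admissible2_edge_bound E_e; rewrite card_E //; lia.
Qed.

End TwoColoring.

Lemma cd_ecd_attained r E t (g : {ffun T -> option 'I_r}) :
  cd_admissible E t g -> equitable g ->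
  (forall g' : {ffun T -> option 'I_r},
     cd_admissible E t g' -> #|part g None| <= #|part g' None|) ->
  cd r E t = #|part g None| /\ ecd r E t = #|part g None|.
Proof.
move=> adm eqt min_g; split; apply: big_minn_attained; rewrite ?adm ?eqt ?max_card //.
by move=> g' /andP[/min_g].
Qed.

End Hypergraph.

Section Blocks.
Variables (k m : nat).
Local Notation n := #|{: 'I_k * 'I_m}|.

Definition block_index (x : 'I_n) : 'I_k := (enum_val x).1.
Definition block_pos (x : 'I_n) : 'I_m := (enum_val x).2.
Definition block (j : 'I_k) : {set 'I_n} := [set x | block_index x == j].
Definition blocks : {set {set 'I_n}} := [set block j | j : 'I_k].

Lemma card_block_pos j (Q : pred 'I_m) : #|[set x in block j | Q (block_pos x)]| = #|Q|.
Proof.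
have inj_pos : injective (fun u : 'I_m => enum_rank (j, u)) by move=> u v /enum_rank_inj [].
rewrite -(card_imset Q inj_pos); apply: eq_card => x; rewrite !inE /block_index /block_pos.
apply/andP/imsetP => [[/eqP j_x Q_x]|[u Q_u ->]]; last by rewrite enum_rankK eqxx.
by exists (block_pos x) => //; rewrite -j_x -surjective_pairing enum_valK.
Qed.

Lemma card_block j : #|block j| = m.
Proof.
transitivity #|[set x in block j | predT (block_pos x)]|.
  by apply: eq_card => x; rewrite !inE andbT.
by rewrite card_block_pos; apply: card_ord.
Qed.

Lemma card_sum_blocks (A : {set 'I_n}) : #|A| = \sum_(j < k) #|block j :&: A|.
Proof.
rewrite -sum1_card (partition_big block_index predT) //=.
by apply: eq_bigr => j _; rewrite -[RHS]sum1_card; apply: eq_bigl => x; rewrite !inE andbC.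
Qed.

Lemma trivIset_blocks : trivIset blocks.
Proof.
apply/trivIsetP => _ _ /imsetP[i _ ->] /imsetP[j _ ->] ne_ij.
by apply/pred0P => x /=; rewrite !inE; apply: contraNF ne_ij => /andP[/eqP <- /eqP <-].
Qed.

Section PositionColoring.
Variables (r : nat) (c : 'I_m -> option 'I_r).

Definition pos_coloring : {ffun 'I_n -> option 'I_r} := [ffun x => c (block_pos x)].

Lemma card_block_setI_part j i : #|block j :&: part pos_coloring i| = #|[pred u | c u == i]|.
Proof. by rewrite -(card_block_pos j); apply: eq_card => x; rewrite !inE ffunE. Qed.

Lemma card_block_setD_part j i : #|block j :\: part pos_coloring i| = m - #|[pred u | c u == i]|.
Proof. by rewrite cardsD card_block card_block_setI_part. Qed.

Lemma card_part_pos_coloring i : #|part pos_coloring i| = k * #|[pred u | c u == i]|.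
Proof.
rewrite card_sum_blocks (eq_bigr _ (fun j _ => card_block_setI_part j i)).
by rewrite sum_nat_const card_ord.
Qed.

End PositionColoring.

Definition split_pos d (u : 'I_m) : option 'I_2 :=
  if u < d then Some ord0 else if u < 2 * d then Some ord_max else None.

Lemma card_split_pos d o : 2 * d <= m ->
  #|[pred u | split_pos d u == o]| = if o is Some _ then d else m - 2 * d.
Proof.
move=> le_2d_m.
have card_range o' a b : b <= m -> (forall u : 'I_m, (split_pos d u == o') = (a <= u < b)) ->
    #|[pred u | split_pos d u == o']| = b - a.
  move=> le_bm split_o'; rewrite -(card_ord_range a le_bm).
  by apply: eq_card => u; rewrite !inE split_o'.
case: o => [[[|[|//]] i_lt]|]; [rewrite (card_range _ 0 d) ?subn0
  | rewrite (card_range _ d (2 * d)) | rewrite (card_range _ (2 * d) m)]; try lia;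
  by move=> u; have := ltn_ord u; rewrite /split_pos;
    case: (ltnP u d); case: (ltnP u (2 * d)) => //=; lia.
Qed.

Hypothesis m_gt0 : 0 < m.

Lemma block_inj : injective block.
Proof.
move=> i j eq_ij; have : enum_rank (i, Ordinal m_gt0) \in block j.
  by rewrite -eq_ij inE /block_index enum_rankK.
by rewrite inE /block_index enum_rankK => /eqP.
Qed.

Lemma card_blocks : #|blocks| = k.
Proof. by rewrite card_imset ?card_ord //; apply: block_inj. Qed.

End Blocks.

Lemma cd_blocks k m t : t < m -> m <= 2 * t.+1 ->
  cd 2 (blocks k m) t = k * (2 * t.+1 - m) /\ ecd 2 (blocks k m) t = k * (2 * t.+1 - m).
Proof.
move=> lt_tm le_m_2t; pose d := m - t.+1.
have le_2d_m : 2 * d <= m by lia.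
pose g := pos_coloring k (split_pos (m:=m) d).
have card_None : #|part g None| = k * (2 * t.+1 - m).
  by rewrite card_part_pos_coloring card_split_pos //; congr (_ * _); lia.
rewrite -card_None; apply: cd_ecd_attained.
- apply/forallP => e; apply/implyP => /imsetP[j _ ->]; apply/forallP => i.
  by rewrite /subset_t card_block_setD_part card_split_pos //; lia.
- apply/forallP => i; apply/forallP => i'.
  by rewrite !card_part_pos_coloring !card_split_pos ?leq_addr.
- move=> g' /cd_admissible2_part_None_bound; rewrite card_None card_blocks; last by lia.
  apply; first exact: trivIset_blocks.
  by move=> _ /imsetP[j _ ->]; rewrite card_block.
Qed.

Theorem theorem3 (k s : nat) :
  0 < k -> 0 < s -> ~~ odd s ->
  exists (n : nat) (E : {set {set 'I_n}}),
    (forall e, e \in E -> s < #|e|) /\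
    kneser_chi_eq 2 E s k /\
    (forall l : nat, s./2 < l <= s ->
       cd 2 E l = k * (2 * l - s + 1) /\ ecd 2 E l = k * (2 * l - s + 1)).
Proof.
move=> k_gt0 _ _; exists #|{: 'I_k * 'I_s.+1}|, (blocks k s.+1); split.
  by move=> _ /imsetP[j _ ->]; rewrite card_block.
split.
  rewrite -[X in kneser_chi_eq _ _ _ X](card_blocks k (ltn0Sn s)).
  apply: kneser2_chi_trivIset; first exact: trivIset_blocks.
  by apply/set0Pn; exists (block s.+1 (Ordinal k_gt0)); apply: imset_f.
move=> l /andP[]; rewrite ltn_half_double -mul2n => lt_s_2l le_ls.
have -> : 2 * l - s + 1 = 2 * l.+1 - s.+1 by lia.
by apply: cd_blocks; lia.
Qed.
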